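(* Let $(S,\mathcal F,\mathcal L)$ be a $p$-local finite group. If every $\mathcal C_p$-element of $S$ lies in the center $Z_{\mathcal F}(S)$ of $\mathcal F$, then $(S,\mathcal F,\mathcal L)$ is nilpotent. In particular, if $p$ is odd and $\Omega_1(S)\subseteq Z_{\mathcal F}(S)$, or $p=2$ and $\Omega_2(S)\subseteq Z_{\mathcal F}(S)$, then $(S,\mathcal F,\mathcal L)$ is nilpotent.
   Context: An element $x\in S$ is a $\mathcal C_p$-element if $x^p=1$ when $p$ is odd, or $x^4=1$ when $p=2$. The center of $\mathcal F$ is $Z_{\mathcal F}(S)=\{x\in Z(S)\mid f(x)=x \text{ for every morphism } f \text{ of } \mathcal F^c\}$ (note $Z(S)\le P$ for every $\mathcal F$-centric $P$). $\Omega_i(S)$ is the subgroup of $S$ generated by all $x$ with $x^{p^i}=1$. Let $S$ be a finite $p$-group. For $P,Q\le S$, $\mathrm{Hom}_S(P,Q)$ is the set of maps $c_g\colon x\mapsto gxg^{-1}$ with $g\in S$, $gPg^{-1}\le Q$, and $\mathrm{Aut}_S(P)=\mathrm{Hom}_S(P,P)$. A fusion system $\mathcal F$ over $S$ is a category whose objects are the subgroups of $S$, with $\mathrm{Hom}_S(P,Q)\subseteq\mathrm{Hom}_{\mathcal F}(P,Q)\subseteq \mathrm{Inj}(P,Q)$, such that every morphism factors as an $\mathcal F$-isomorphism followed by an inclusion. Subgroups are $\mathcal F$-conjugate if they are isomorphic in $\mathcal F$. $P$ is fully centralized (resp. fully normalized) if $|C_S(P)|\ge |C_S(P')|$ (resp.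 $|N_S(P)|\ge|N_S(P')|$) for all $P'$ $\mathcal F$-conjugate to $P$. $\mathcal F$ is saturated if (I) every fully normalized $P$ is fully centralized and $\mathrm{Aut}_S(P)$ is a Sylow $p$-subgroup of $\mathrm{Aut}_{\mathcal F}(P)$, and (II) whenever $\phi\in\mathrm{Hom}_{\mathcal F}(P,S)$ with $\phi(P)$ fully centralized, $\phi$ extends to a morphism in $\mathcal F$ defined on $N_\phi=\{g\in N_S(P):\phi c_g\phi^{-1}\in \mathrm{Aut}_S(\phi(P))\}$. $P$ is $\mathcal F$-centric if $C_S(P')\le P'$ for all $P'$ $\mathcal F$-conjugate to $P$; $\mathcal F^c$ is the full subcategory on these. A centric linking system associated to $\mathcal F$ is a category $\mathcal L$ with objects the $\mathcal F$-centric subgroups, a functor $\pi\colon\mathcal L\to\mathcal F^c$ which is the identity on objects, and monomorphisms $\delta_P\colon P\to\mathrm{Aut}_{\mathcal L}(P)$, such that (A) $Z(P)$ (via $\delta_P$) acts freely on $\mathrm{Mor}_{\mathcal L}(P,Q)$ by composition and $\pi$ induces a bijection $\mathrm{Mor}_{\mathcal L}(P,Q)/Z(P)\to\mathrm{Hom}_{\mathcal F}(P,Q)$; (B) $\pi(\delta_P(g))=c_g$ for $g\in P$; (C) $f\circ\delta_P(g)=\delta_Q(\pi(f)(g))\circ f$ for $f\in\mathrm{Mor}_{\mathcal L}(P,Q)$, $g\in P$. A $p$-local finite group is a triple $(S,\mathcal F,\mathcal L)$ with $\mathcal F$ a saturated fusion system over $S$ and $\mathcal L$ an associated centric linking system.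 $(S,\mathcal F,\mathcal L)$ is called nilpotent if $\mathcal F=\mathcal F_S(S)$, the fusion system with $\mathrm{Hom}_{\mathcal F_S(S)}(P,Q)=\mathrm{Hom}_S(P,Q)$. *)

From mathcomp Require Import all_boot all_fingroup all_solvable.
Set Implicit Arguments. Unset Strict Implicit. Unset Printing Implicit Defensive.
Import GroupScope.
Local Open Scope group_scope.

Section PLocal.
Variable gT : finGroupType.

(* A fusion system is encoded by its Hom-sets: F P Q f means that the map
   P -> Q given by the restriction to P of f lies in Hom_F(P,Q).  Values of
   f outside P are irrelevant (extensionality axiom below). *)
Definition fsys := {set gT} -> {set gT} -> {ffun gT -> gT} -> bool.

Definition homS (S P Q : {set gT}) (f : {ffun gT -> gT}) : bool :=
  [exists g in S, ([set g * x * g^-1 | x in P] \subset Q)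
                  && [forall x in P, f x == g * x * g^-1]].

Definition injhom (P Q : {set gT}) (f : {ffun gT -> gT}) : Prop :=
  [/\ {in P &, {morph f : x y / x * y}}, {in P &, injective f}
    & {in P, forall x, f x \in Q}].

Definition fcomp (g f : {ffun gT -> gT}) : {ffun gT -> gT} := [ffun x => g (f x)].

Definition Fiso (F : fsys) (P Q : {set gT}) (f : {ffun gT -> gT}) : Prop :=
  F P Q f /\ exists h, [/\ F Q P h, {in P, cancel f h} & {in Q, cancel h f}].

Definition Fconj (F : fsys) (P Q : {set gT}) : Prop := exists f, Fiso F P Q f.

Definition fusion_system (S : {group gT}) (F : fsys) : Prop :=
  forall P Q R : {group gT}, P \subset S -> Q \subset S -> R \subset S ->
  [/\ (forall f g : {ffun gT -> gT}, {in P, f =1 g} -> F P Q f = F P Q g),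
      (forall f, homS S P Q f -> F P Q f),
      (forall f, F P Q f -> injhom P Q f),
      (forall f g : {ffun gT -> gT}, F P Q f -> F Q R g -> F P R (fcomp g f))
    & (forall f, F P Q f -> exists (T : {group gT}) psi,
          [/\ T \subset Q, Fiso F P T psi & {in P, f =1 psi}])].

Definition fully_centralized (S : {group gT}) (F : fsys) (P : {set gT}) : Prop :=
  forall P' : {group gT}, P' \subset S -> Fconj F P P' -> #|'C_S(P')| <= #|'C_S(P)|.

Definition fully_normalized (S : {group gT}) (F : fsys) (P : {set gT}) : Prop :=
  forall P' : {group gT}, P' \subset S -> Fconj F P P' -> #|'N_S(P')| <= #|'N_S(P)|.

Definition AutF (F : fsys) (P : {set gT}) : {set {perm gT}} :=
  [set a in Aut P | F P P [ffun x => a x]].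

Definition AutS (S P : {set gT}) : {set {perm gT}} :=
  [set a in Aut P | [exists g in 'N_S(P), [forall x in P, a x == g * x * g^-1]]].

(* N_phi = { g in N_S(P) | phi c_g phi^-1 in Aut_S(phi(P)) } *)
Definition Nphi (S P : {set gT}) (phi : {ffun gT -> gT}) : {set gT} :=
  [set g in 'N_S(P) | [exists h in 'N_S(phi @: P),
      [forall x in P, phi (g * x * g^-1) == h * phi x * h^-1]]].

Definition saturated (p : nat) (S : {group gT}) (F : fsys) : Prop :=
  fusion_system S F /\
  (forall P : {group gT}, P \subset S -> fully_normalized S F P ->
      fully_centralized S F P /\ p.-Sylow(AutF F P) (AutS S P)) /\
  (forall (P : {group gT}) (phi : {ffun gT -> gT}), P \subset S -> F P S phi ->
      fully_centralized S F (phi @: P) ->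
      exists psi, F (Nphi S P phi) S psi /\ {in P, psi =1 phi}).

Definition centric (S : {group gT}) (F : fsys) (P : {set gT}) : Prop :=
  forall P' : {group gT}, P' \subset S -> Fconj F P P' -> 'C_S(P') \subset P'.

Record linking_system (S : {group gT}) (F : fsys) := LinkingSystem {
  Mor : {set gT} -> {set gT} -> Type;
  idL : forall P, Mor P P;
  compL : forall P Q R, Mor Q R -> Mor P Q -> Mor P R;
  piL : forall P Q, Mor P Q -> {ffun gT -> gT};
  deltaL : forall P, gT -> Mor P P;
  _ : forall (P Q : {group gT}) (f : Mor P Q),
        P \subset S -> Q \subset S -> centric S F P -> centric S F Q ->
        compL f (idL P) = f /\ compL (idL Q) f = f;
  _ : forall (P Q R T : {group gT}) (f : Mor P Q) (g : Mor Q R) (h : Mor R T),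
        P \subset S -> Q \subset S -> R \subset S -> T \subset S ->
        centric S F P -> centric S F Q -> centric S F R -> centric S F T ->
        compL h (compL g f) = compL (compL h g) f;
  _ : forall P : {group gT}, P \subset S -> centric S F P ->
        {in P, forall x, piL (idL P) x = x};
  _ : forall (P Q R : {group gT}) (f : Mor P Q) (g : Mor Q R),
        P \subset S -> Q \subset S -> R \subset S ->
        centric S F P -> centric S F Q -> centric S F R ->
        {in P, piL (compL g f) =1 fcomp (piL g) (piL f)};
  _ : forall (P Q : {group gT}) (f : Mor P Q),
        P \subset S -> Q \subset S -> centric S F P -> centric S F Q ->
        F P Q (piL f);
  _ : forall P : {group gT}, P \subset S -> centric S F P ->
        [/\ deltaL P 1 = idL P,
            {in P &, forall g h, deltaL P (g * h) = compL (deltaL P g) (deltaL P h)}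
          & {in P &, injective (deltaL P)}];
  _ : forall (P Q : {group gT}) (f : Mor P Q),
        P \subset S -> Q \subset S -> centric S F P -> centric S F Q ->
        forall z, z \in 'Z(P) -> compL f (deltaL P z) = f -> z = 1;
  _ : forall (P Q : {group gT}) (phi : {ffun gT -> gT}),
        P \subset S -> Q \subset S -> centric S F P -> centric S F Q ->
        F P Q phi -> exists f : Mor P Q, {in P, piL f =1 phi};
  _ : forall (P Q : {group gT}) (f g : Mor P Q),
        P \subset S -> Q \subset S -> centric S F P -> centric S F Q ->
        ({in P, piL f =1 piL g} <-> exists2 z, z \in 'Z(P) & g = compL f (deltaL P z));
  _ : forall P : {group gT}, P \subset S -> centric S F P ->
        forall g, g \in P -> {in P, forall x, piL (deltaL P g) x = g * x * g^-1};
  _ : forall (P Q : {group gT}) (f : Mor P Q),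
        P \subset S -> Q \subset S -> centric S F P -> centric S F Q ->
        forall g, g \in P -> compL f (deltaL P g) = compL (deltaL Q (piL f g)) f
}.

Definition in_center (S : {group gT}) (F : fsys) (x : gT) : Prop :=
  x \in 'Z(S) /\
  forall (P Q : {group gT}) (f : {ffun gT -> gT}),
    P \subset S -> Q \subset S -> centric S F P -> centric S F Q ->
    F P Q f -> f x = x.

Definition Cp_elt (p : nat) (x : gT) : bool :=
  if p == 2 then x ^+ 4 == 1 else x ^+ p == 1.

Definition Omega (p i : nat) (S : {set gT}) : {set gT} :=
  <<[set x in S | x ^+ (p ^ i) == 1]>>.

Definition nilpotent_fs (S : {group gT}) (F : fsys) : Prop :=
  forall (P Q : {group gT}) f, P \subset S -> Q \subset S -> F P Q f = homS S P Q f.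

End PLocal.

(* Every F-morphism P -> S is conjugation by an element of S, by downward
   induction on |P|.  Routing a morphism through a fully normalized conjugate Q
   and using the extension axiom over N_S(P) > P, everything reduces to
   Aut_F(Q) = Aut_S(Q).  If Q is not centric, an automorphism f extends to
   N_f >= Q C_S(Q) > Q and the induction applies.  If Q is centric, a
   p'-element of Aut_F(Q) fixes the C_p-elements of Q, hence (class-two
   computation) a critical subgroup K of Q pointwise, hence lies in the
   p-group C_Aut(Q)(K) and is trivial; so Aut_F(Q) is a p-group and equals
   its Sylow subgroup Aut_S(Q). *)

From mathcomp Require Import all_boot all_fingroup all_solvable.
From Stdlib Require Import Classical.
Import GroupScope.
Set Implicit Arguments. Unset Strict Implicit. Unset Printing Implicit Defensive.

Section CpAutomorphisms.
Variables (gT : finGroupType) (p : nat).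
Hypothesis pr_p : prime p.

Lemma Cp_elt1 : Cp_elt p (1 : gT).
Proof. by rewrite /Cp_elt !expg1n eqxx; case: ifP. Qed.

(* In class at most two, [~ z, y^-1] is central of order dividing p, and
   (y^-1 z)^m = y^-m z^m [~ z, y^-1]^'C(m, 2) with m = p (p odd) or m = 4. *)
Lemma Cp_elt_mulV_class2 (K : {group gT}) y z :
  nil_class K <= 2 -> y \in K -> z \in K -> y ^+ p = z ^+ p -> Cp_elt p (y^-1 * z).
Proof.
move=> clK Ky Kz yz_p; set c := [~ z, y^-1].
have cKc : forall w, w \in K -> commute w c.
  have cZ : c \in 'Z(K).
    by apply: (subsetP _ _ (mem_commg Kz (groupVr Ky))); rewrite -nil_class2.
  by move=> w Kw; case/centerP: cZ => _ /(_ w Kw).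
have c_p : c ^+ p = 1.
  rewrite /c -commgX; last by apply: cKc; rewrite groupV.
  by rewrite expVgn yz_p commgXVg.
have uX m : (y^-1 * z) ^+ m = y ^- m * z ^+ m * c ^+ 'C(m, 2).
  by rewrite expMg_Rmul ?expVgn //; apply: cKc; rewrite ?groupV.
rewrite /Cp_elt !uX; case: eqP => [p2 | /eqP p_n2].
  have -> : y ^- 4 * z ^+ 4 = 1 by rewrite -[4]/(2 * 2)%N !expgM -p2 yz_p mulVg.
  have -> : 'C(4, 2) = (p * 3)%N by rewrite p2.
  by rewrite mul1g expgM c_p expg1n.
have odd_p : odd p by case/even_prime: pr_p => // p2; rewrite p2 in p_n2.
by rewrite yz_p mulVg mul1g bin2odd // expgM c_p expg1n.
Qed.

Variables (Q : {group gT}) (b : {perm gT}).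
Hypotheses (pQ : p.-group Q) (autQb : b \in Aut Q) (p'b : p^'.-elt b).

Let bM : {in Q &, {morph b : x y / x * y}} := morphicP (Aut_morphic autQb).

Lemma aut_expgE x k : x \in Q -> b (x ^+ k) = b x ^+ k.
Proof. by move=> Qx; rewrite -(autmE autQb) morphX. Qed.

(* b^j maps y to y u^j, so the p-element u has order dividing the p'-number #[b]. *)
Lemma p'_aut_shift_trivial y u : y \in Q -> u \in Q -> b u = u -> b y = y * u -> u = 1.
Proof.
move=> Qy Qu bu by_u.
have bjy j : (b ^+ j) y = y * u ^+ j.
  elim: j => [|j IHj]; first by rewrite expg0 perm1 mulg1.
  by rewrite expgSr permM IHj bM ?groupX // aut_expgE // by_u bu -mulgA -expgS.
have u_ob : u ^+ #[b] = 1 by apply: (mulgI y); rewrite -bjy expg_order perm1 mulg1.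
apply/eqP; rewrite -order_eq1; apply/eqP; apply: (pnat_1 (mem_p_elt pQ Qu)).
by apply: pnat_dvd p'b; rewrite order_dvdn u_ob.
Qed.

Hypothesis bCp : forall x, x \in Q -> Cp_elt p x -> b x = x.

Lemma p'_aut_fix_class2 (K : {group gT}) :
  K \char Q -> nil_class K <= 2 -> {in K, forall y, b y = y}.
Proof.
move=> chK clK; have sKQ := char_sub chK.
have bK x : x \in K -> b x \in K.
  move=> Kx; have /subsetP-> // := forall_inP (andP chK).2 b autQb.
  exact: imset_f.
move=> y; elim: {y}#[y] {-2}y (leqnn #[y]) => [|n IHn] y oy Ky.
  by move: (order_gt0 y); rewrite leqn0 in oy; rewrite (eqP oy).
have Qy := subsetP sKQ y Ky.
have [Cpy | nCpy] := boolP (Cp_elt p y); first exact: bCp.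
have p_dvd_y : p %| #[y].
  have [k oyE] := p_natP (mem_p_elt pQ Qy).
  have : y != 1 by apply: contraNneq nCpy => ->; apply: Cp_elt1.
  by rewrite -order_eq1 oyE; case: k {oyE} => // k _; rewrite expnS dvdn_mulr.
have by_p : b (y ^+ p) = y ^+ p.
  apply: IHn; last by rewrite groupX.
  by rewrite orderXdiv // -ltnS (leq_trans _ oy) // ltn_Pdiv ?prime_gt1.
have Ku : y^-1 * b y \in K by rewrite groupM ?groupV ?bK.
have Cpu : Cp_elt p (y^-1 * b y).
  by apply: (Cp_elt_mulV_class2 clK) => //; rewrite ?bK // -aut_expgE.
have Qu := subsetP sKQ _ Ku.
have -> : b y = y * (y^-1 * b y) by rewrite mulKVg.
by rewrite (p'_aut_shift_trivial Qy Qu (bCp Qu Cpu)) ?mulg1 // mulKVg.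
Qed.

Lemma p'_aut_fix_Cp_trivial : b = 1.
Proof.
have [K critK] := Thompson_critical pQ.
have chK : K \char Q by case: critK.
have bK := p'_aut_fix_class2 chK (critical_class2 critK).
have CKb : b \in 'C(K | [Aut Q]).
  rewrite !inE /=; move: (autQb); rewrite inE => /andP[-> ->] /=.
  by apply/subsetP=> x Kx; rewrite inE; apply/eqP; apply: bK.
have pb : p.-elt b := mem_p_elt (critical_p_stab_Aut critK pQ) CKb.
by apply/eqP; rewrite -order_eq1; apply/eqP; apply: pnat_1 pb p'b.
Qed.

End CpAutomorphisms.

Section ConjugationMaps.
Variable gT : finGroupType.
Implicit Types (P Q : {group gT}) (f : {ffun gT -> gT}) (g x : gT).

Lemma conjVgE g x : x ^ g^-1 = g * x * g^-1.
Proof. by rewrite conjgE invgK mulgA. Qed.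

Lemma norm_conj_mem (A : {set gT}) g x : g \in 'N(A) -> x \in A -> g * x * g^-1 \in A.
Proof. by move=> nAg Ax; rewrite -conjVgE memJ_norm ?groupV. Qed.

Lemma conj_stable_norm P g : (forall x, x \in P -> g * x * g^-1 \in P) -> g \in 'N(P).
Proof.
move=> gP; rewrite -groupV; apply/normP/eqP; rewrite eqEcard cardJg leqnn andbT.
by apply/subsetP=> _ /imsetP[x Px ->]; rewrite conjVgE gP.
Qed.

Lemma homS_conj (S A B : {set gT}) g f : g \in S ->
  {in A, forall x, f x = g * x * g^-1} -> {in A, forall x, g * x * g^-1 \in B} ->
  homS S A B f.
Proof.
move=> Sg fE gAB; apply/exists_inP; exists g => //; apply/andP; split.
  by apply/subsetP=> _ /imsetP[x Ax ->]; apply: gAB.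
by apply/forall_inP=> x Ax; rewrite fE.
Qed.

Lemma injhom1 (A B : {set gT}) f : 1 \in A -> injhom A B f -> f 1 = 1.
Proof. by move=> A1 [fM _ _]; apply: (@mulgI _ (f 1)); rewrite mulg1 -fM ?mulg1. Qed.

Lemma injhomV P (B : {set gT}) f x : injhom P B f -> x \in P -> f x^-1 = (f x)^-1.
Proof.
move=> fP Px; have [fM _ _] := fP; apply: (@mulgI _ (f x)).
by rewrite -fM ?groupV // mulgV mulgV (injhom1 (group1 P) fP).
Qed.

Lemma injhom_leq_card (A B : {set gT}) f : injhom A B f -> #|A| <= #|B|.
Proof.
case=> _ finj fAB; rewrite -(card_in_imset finj); apply: subset_leq_card.
by apply/subsetP=> _ /imsetP[x Ax ->]; apply: fAB.
Qed.

Lemma injhom_onto (A B : {set gT}) f : injhom A B f -> #|B| <= #|A| -> f @: A = B.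
Proof.
case=> _ finj fA leBA; apply/eqP.
rewrite eqEcard (card_in_imset finj) leBA andbT.
by apply/subsetP=> _ /imsetP[x Ax ->]; apply: fA.
Qed.

Lemma injhom_Aut P f : injhom P P f -> exists2 a : {perm gT}, a \in Aut P & {in P, a =1 f}.
Proof.
case=> fM finj fP; pose fa x := if x \in P then f x else x.
have fa_inj : injective fa.
  move=> x y; rewrite /fa; case: ifPn => Px; case: ifPn => Py //; first exact: finj.
    by move=> fxy; move: (fP x Px); rewrite fxy (negPf Py).
  by move=> fxy; move: (fP y Py); rewrite -fxy (negPf Px).
exists (perm fa_inj); last by move=> x Px; rewrite permE /fa Px.
rewrite inE; apply/andP; split.
  by apply/subsetP=> x; rewrite inE permE /fa; case: ifP => // _; rewrite eqxx.
by apply/morphicP=> x y Px Py; rewrite !permE /fa groupM ?Px ?Py //; apply: fM.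
Qed.

End ConjugationMaps.

Section FusionSystem.
Variables (gT : finGroupType) (S : {group gT}) (F : fsys gT).
Hypothesis fusF : fusion_system S F.
Implicit Types (P Q R T : {group gT}) (f g : {ffun gT -> gT}).

Lemma fus_ext P Q f g : P \subset S -> Q \subset S -> {in P, f =1 g} -> F P Q f -> F P Q g.
Proof. by move=> sPS sQS fg; case: (fusF sPS sQS sQS) => ext _ _ _ _; rewrite (ext f g). Qed.

Lemma fus_homS P Q f : P \subset S -> Q \subset S -> homS S P Q f -> F P Q f.
Proof. by move=> sPS sQS; case: (fusF sPS sQS sQS) => _ hom _ _ _; apply: hom. Qed.

Lemma fus_injhom P Q f : P \subset S -> Q \subset S -> F P Q f -> injhom P Q f.
Proof. by move=> sPS sQS; case: (fusF sPS sQS sQS) => _ _ inj _ _; apply: inj. Qed.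

Lemma fus_comp P Q R f g : P \subset S -> Q \subset S -> R \subset S ->
  F P Q f -> F Q R g -> F P R (fcomp g f).
Proof. by move=> sPS sQS sRS; case: (fusF sPS sQS sRS) => _ _ _ comp _; apply: comp. Qed.

Lemma fus_factor P Q f : P \subset S -> Q \subset S -> F P Q f ->
  exists T psi, [/\ T \subset Q, Fiso F P T psi & {in P, f =1 psi}].
Proof. by move=> sPS sQS; case: (fusF sPS sQS sQS) => _ _ _ _ iso; apply: iso. Qed.

Lemma fus_conj P Q f (g : gT) : P \subset S -> Q \subset S -> g \in S ->
  {in P, forall x, f x = g * x * g^-1} -> {in P, forall x, g * x * g^-1 \in Q} -> F P Q f.
Proof. by move=> sPS sQS Sg fE gPQ; apply/fus_homS/(homS_conj Sg fE gPQ). Qed.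

Lemma fus_incl P Q f : P \subset S -> Q \subset S -> P \subset Q -> {in P, f =1 id} -> F P Q f.
Proof.
move=> sPS sQS sPQ fE; apply: (fus_conj sPS sQS (group1 S)) => x Px.
  by rewrite fE // invg1 mulg1 mul1g.
by rewrite invg1 mulg1 mul1g (subsetP sPQ).
Qed.

Definition idf : {ffun gT -> gT} := [ffun x => x].

Lemma fus_restr P P' Q Q' f : P \subset S -> Q' \subset S -> P' \subset P -> Q \subset Q' ->
  F P Q f -> F P' Q' f.
Proof.
move=> sPS sQ'S sP'P sQQ' Ff; have sP'S := subset_trans sP'P sPS.
have sQS := subset_trans sQQ' sQ'S.
have iP'P : F P' P idf by apply: fus_incl => // x _; rewrite ffunE.
have iQQ' : F Q Q' idf by apply: fus_incl => // x _; rewrite ffunE.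
have := fus_comp sP'S sQS sQ'S (fus_comp sP'S sPS sQS iP'P Ff) iQQ'.
by apply: fus_ext => // x _; rewrite !ffunE.
Qed.

Lemma Fiso_card P T f : P \subset S -> T \subset S -> Fiso F P T f -> #|P| = #|T|.
Proof.
move=> sPS sTS [Ff [h [Fh _ _]]]; apply/eqP; rewrite eqn_leq.
by rewrite (injhom_leq_card (fus_injhom sPS sTS Ff)) (injhom_leq_card (fus_injhom sTS sPS Fh)).
Qed.

Lemma Fiso_id P : P \subset S -> Fiso F P P idf.
Proof.
move=> sPS; have Fi : F P P idf by apply: fus_incl => // x _; rewrite ffunE.
by split=> //; exists idf; split=> // x _; rewrite !ffunE.
Qed.

Lemma Fiso_comp P Q R f g : P \subset S -> Q \subset S -> R \subset S ->
  Fiso F P Q f -> Fiso F Q R g -> Fiso F P R (fcomp g f).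
Proof.
move=> sPS sQS sRS [Ff [f' [Ff' ff' f'f]]] [Fg [g' [Fg' gg' g'g]]].
have [_ _ fPQ] := fus_injhom sPS sQS Ff; have [_ _ g'RQ] := fus_injhom sRS sQS Fg'.
split; first exact: fus_comp Ff Fg.
exists (fcomp f' g'); split; first exact: fus_comp Fg' Ff'.
  by move=> x Px; rewrite !ffunE gg' ?ff' ?fPQ.
by move=> x Rx; rewrite !ffunE f'f ?g'g ?g'RQ.
Qed.

Lemma Fconj_trans P Q R : P \subset S -> Q \subset S -> R \subset S ->
  Fconj F P Q -> Fconj F Q R -> Fconj F P R.
Proof. by move=> sPS sQS sRS [f fi] [g gi]; exists (fcomp g f); apply: Fiso_comp fi gi. Qed.

Lemma Nphi_group (A : {set gT}) f : group_set (Nphi S A f).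
Proof.
apply/group_setP; split.
  rewrite inE group1 /=; apply/exists_inP; exists 1; rewrite ?group1 //.
  by apply/forall_inP=> x _; rewrite invg1 !mulg1 !mul1g.
move=> g1 g2 /setIdP[Ng1 /exists_inP[h1 Nh1 /forall_inP E1]].
move=> /setIdP[Ng2 /exists_inP[h2 Nh2 /forall_inP E2]].
rewrite inE groupM //; apply/exists_inP; exists (h1 * h2); first by rewrite groupM.
apply/forall_inP=> x Ax; have [_ nAg2] := setIP Ng2.
have -> : g1 * g2 * x * (g1 * g2)^-1 = g1 * (g2 * x * g2^-1) * g1^-1.
  by rewrite invMg !mulgA.
by rewrite (eqP (E1 _ (norm_conj_mem nAg2 Ax))) (eqP (E2 _ Ax)) invMg !mulgA.
Qed.

Lemma AutF_group P : P \subset S -> group_set (AutF F P).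
Proof.
move=> sPS; apply/group_setP; split.
  by rewrite inE group1 /=; apply: fus_incl => // x _; rewrite ffunE perm1.
move=> a b /setIdP[Aa Fa] /setIdP[Ab Fb]; rewrite inE groupM //=.
by have := fus_comp sPS sPS sPS Fa Fb; apply: fus_ext => // x _; rewrite !ffunE permM.
Qed.

Lemma AutS_group P : group_set (AutS S P).
Proof.
apply/group_setP; split.
  rewrite inE group1 /=; apply/exists_inP; exists 1; rewrite ?group1 //.
  by apply/forall_inP=> x _; rewrite perm1 invg1 mulg1 mul1g.
move=> a b /setIdP[Aa /exists_inP[ga Nga /forall_inP Ea]].
move=> /setIdP[Ab /exists_inP[gb Ngb /forall_inP Eb]].
rewrite inE groupM //; apply/exists_inP; exists (gb * ga); first by rewrite groupM.
apply/forall_inP=> x Px; have [_ nPga] := setIP Nga.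
by rewrite permM (eqP (Ea _ Px)) (eqP (Eb _ (norm_conj_mem nPga Px))) invMg !mulgA.
Qed.

Variable p : nat.
Hypotheses (pr_p : prime p) (pS : p.-group S).
Hypothesis satI : forall P, P \subset S -> fully_normalized S F P ->
  fully_centralized S F P /\ p.-Sylow(AutF F P) (AutS S P).
Hypothesis satII : forall P f, P \subset S -> F P S f -> fully_centralized S F (f @: P) ->
  exists psi, F (Nphi S P f) S psi /\ {in P, psi =1 f}.
Hypothesis Cp_fixed : forall Q f x, Q \subset S -> centric S F Q -> F Q Q f ->
  x \in Q -> Cp_elt p x -> f x = x.

Lemma AutF_centric_pgroup Q (sQS : Q \subset S) :
  centric S F Q -> p.-group (Group (AutF_group sQS)).
Proof.
move=> cQ; set AFQ := Group _; apply/pgroupP=> q pr_q /(Cauchy pr_q)[a AFa oa].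
have AFa' : a.`_p^' \in AFQ.
  by apply: (subsetP _ _ (cycle_constt p^' a)); rewrite cycle_subG.
have /setIdP[autQa' Fa'] := AFa'.
have a'1 : a.`_p^' = 1.
  apply: (p'_aut_fix_Cp_trivial pr_p (pgroupS sQS pS) autQa' (p_elt_constt _ _)).
  by move=> x Qx Cpx; have := Cp_fixed sQS cQ Fa' Qx Cpx; rewrite ffunE.
have : p.-elt a by rewrite -(consttC p a) a'1 mulg1 p_elt_constt.
by rewrite /p_elt oa (pnatE _ pr_q).
Qed.

Lemma AutF_centric_conj Q f : Q \subset S -> fully_normalized S F Q -> centric S F Q ->
  F Q Q f -> exists2 h, h \in 'N_S(Q) & {in Q, forall x, f x = h * x * h^-1}.
Proof.
move=> sQS fnQ cQ Ff; have [_ sylQ] := satI sQS fnQ.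
have AutFS := pHall_id (sylQ : p.-Sylow(Group (AutF_group sQS)) (Group (AutS_group Q)))
  (AutF_centric_pgroup sQS cQ).
have [a autQa aE] := injhom_Aut (fus_injhom sQS sQS Ff).
have : a \in AutF F Q.
  by rewrite inE autQa; apply: (fus_ext sQS sQS _ Ff) => x Qx; rewrite ffunE aE.
rewrite -[AutF F Q]/(gval (Group (AutF_group sQS))) -AutFS.
case/setIdP=> _ /exists_inP[h Nh /forall_inP hE].
by exists h => // x Qx; rewrite -aE // (eqP (hE x Qx)).
Qed.

(* Injectivity moves Z(Q) into Z(Q') <= C_S(Q'), and full centralization
   bounds |C_S(Q')| by |C_S(Q)| = |Z(Q)|, so all three coincide. *)
Lemma fully_centralized_centric Q : Q \subset S -> fully_centralized S F Q ->
  'C_S(Q) \subset Q -> centric S F Q.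
Proof.
move=> sQS fcQ sCQ Q' sQ'S [f [Ff [h [Fh fh hf]]]].
have le_CQ' := fcQ Q' sQ'S (ex_intro _ f (conj Ff (ex_intro _ h (And3 Fh fh hf)))).
have le_CZ : #|'C_S(Q)| <= #|'Z(Q)|.
  by apply: subset_leq_card; rewrite subsetI sCQ subsetIr.
have [fM finj fQ] := fus_injhom sQS sQ'S Ff; have [_ _ hQ] := fus_injhom sQ'S sQS Fh.
have le_ZZ' : #|'Z(Q)| <= #|'Z(Q')|.
  have injZ : {in 'Z(Q) &, injective f}.
    by move=> x y /setIP[Qx _] /setIP[Qy _]; apply: finj.
  rewrite -(card_in_imset injZ); apply: subset_leq_card.
  apply/subsetP=> _ /imsetP[z /setIP[Qz cQz] ->]; rewrite inE fQ //=.
  apply/centP=> w Q'w; rewrite -(hf w Q'w) /commute -!fM ?hQ //.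
  by move/centP: cQz => /(_ _ (hQ w Q'w)) ->.
have sZC : 'Z(Q') \subset 'C_S(Q') by rewrite subsetI subsetIr (subset_trans (center_sub _)).
have -> : 'C_S(Q') = 'Z(Q').
  by apply/esym/eqP; rewrite eqEcard sZC (leq_trans le_CQ' (leq_trans le_CZ le_ZZ')).
exact: center_sub.
Qed.

Definition S_conj (A : {set gT}) f := exists2 g, g \in S & {in A, forall x, f x = g * x * g^-1}.

Definition S_conj_above k :=
  forall R, R \subset S -> k < #|R| -> forall f, F R S f -> S_conj R f.

Lemma cent_sub_Nphi (A : {set gT}) f : 'C_S(A) \subset Nphi S A f.
Proof.
apply/subsetP=> g /setIP[Sg cAg]; rewrite inE inE Sg (subsetP (cent_sub A)) //=.
apply/exists_inP; exists 1; rewrite ?group1 //; apply/forall_inP=> x Ax.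
by rewrite invg1 mulg1 mul1g; move/centP: cAg => /(_ x Ax) ->; rewrite mulgK.
Qed.

Lemma sub_Nphi Q f : Q \subset S -> injhom Q Q f -> Q \subset Nphi S Q f.
Proof.
move=> sQS fQ; have [fM _ fQQ] := fQ; have fQE := injhom_onto fQ (leqnn _).
apply/subsetP=> g Qg; rewrite inE inE (subsetP sQS) ?(subsetP (normG Q)) //=.
apply/exists_inP; exists (f g); first by rewrite fQE inE (subsetP sQS) ?(subsetP (normG Q)) ?fQQ.
by apply/forall_inP=> x Qx; rewrite !fM ?groupM ?groupV // (injhomV fQ Qg).
Qed.

(* In the non-centric case N_f contains Q C_S(Q) > Q, so the extension of f
   provided by saturation falls under the induction hypothesis. *)
Lemma AutF_fully_normalized_conj Q f : S_conj_above #|Q| -> Q \subset S ->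
  fully_normalized S F Q -> F Q Q f ->
  exists2 h, h \in 'N_S(Q) & {in Q, forall x, f x = h * x * h^-1}.
Proof.
move=> IH sQS fnQ Ff; have [fcQ _] := satI sQS fnQ.
have [sCQ | nsCQ] := boolP ('C_S(Q) \subset Q).
  exact: AutF_centric_conj (fully_centralized_centric sQS fcQ sCQ) Ff.
have fQ := fus_injhom sQS sQS Ff; have [_ _ fQQ] := fQ.
have FfS : F Q S f := fus_restr sQS (subxx S) (subxx Q) sQS Ff.
have [psi [Fpsi psiE]] : exists psi, F (Nphi S Q f) S psi /\ {in Q, psi =1 f}.
  by apply: satII => //; rewrite (injhom_onto fQ (leqnn _)).
pose N := Group (Nphi_group Q f).
have sNS : N \subset S by apply/subsetP=> g /setIdP[/setIP[]].
have ltQN : #|Q| < #|N|.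
  apply: proper_card; rewrite properE sub_Nphi //=.
  by apply: contra nsCQ => sNQ; apply: subset_trans (@cent_sub_Nphi Q f) sNQ.
have [g Sg gE] := IH N sNS ltQN psi Fpsi.
have fE : {in Q, forall x, f x = g * x * g^-1}.
  by move=> x Qx; rewrite -psiE // gE // (subsetP (sub_Nphi sQS fQ)).
by exists g; rewrite // inE Sg conj_stable_norm // => x Qx; rewrite -fE ?fQQ.
Qed.

Lemma fus_inverse T Q f : T \subset S -> Q \subset S -> F T Q f -> #|Q| <= #|T| ->
  exists2 h, F Q T h & {in T, cancel f h}.
Proof.
move=> sTS sQS Ff leQT.
have [T' [g [sT'Q [Fg [h [Fh gK hK]]] fg]]] := fus_factor sTS sQS Ff.
have sT'S := subset_trans sT'Q sQS.
have eqT'Q : T' :=: Q.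
  apply/eqP; rewrite eqEcard sT'Q /=.
  by rewrite -(Fiso_card sTS sT'S (conj Fg (ex_intro _ h (And3 Fh gK hK)))).
by exists h; [rewrite -eqT'Q | move=> x Tx; rewrite fg ?gK].
Qed.

(* The saturation axiom extends f over N_f, and N_f is all of N_S(T) because
   every F-automorphism of Q is induced by N_S(Q). *)
Lemma fus_extend_normalizer T Q f : T \subset S -> Q \subset S ->
  fully_centralized S F Q ->
  (forall a, F Q Q a -> exists2 h, h \in 'N_S(Q) & {in Q, forall x, a x = h * x * h^-1}) ->
  F T Q f -> #|Q| <= #|T| ->
  exists psi, F 'N_S(T) S psi /\ {in T, psi =1 f}.
Proof.
move=> sTS sQS fcQ AutQ Ff leQT.
have fT := fus_injhom sTS sQS Ff; have [_ _ fTQ] := fT.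
have fTE : f @: T = Q := injhom_onto fT leQT.
have [h Fh fK] := fus_inverse sTS sQS Ff leQT.
have NfE : Nphi S T f = 'N_S(T).
  apply/eqP; rewrite eqEsubset; apply/andP; split; first by apply/subsetP=> g /setIdP[].
  apply/subsetP=> g Ng; rewrite inE Ng /=; have [Sg nTg] := setIP Ng.
  pose cg : {ffun gT -> gT} := [ffun x => g * x * g^-1].
  have Fcg : F T T cg.
    by apply: (fus_conj sTS sTS Sg) => x Tx; rewrite ?ffunE ?norm_conj_mem.
  have [k Nk kE] := AutQ _ (fus_comp sQS sTS sQS (fus_comp sQS sTS sTS Fh Fcg) Ff).
  apply/exists_inP; exists k; rewrite ?fTE //; apply/forall_inP=> x Tx.
  by have := kE _ (fTQ x Tx); rewrite !ffunE fK // => ->.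
have FfS : F T S f := fus_restr sTS (subxx S) (subxx T) sQS Ff.
by rewrite -NfE; apply: satII; rewrite ?fTE.
Qed.

Lemma Fconj_fully_normalized P : P \subset S ->
  exists Q : {group gT}, [/\ Q \subset S, Fconj F P Q & fully_normalized S F Q].
Proof.
move=> sPS; suff: forall Q0 : {group gT}, Q0 \subset S -> Fconj F P Q0 ->
    exists Q : {group gT}, [/\ Q \subset S, Fconj F P Q & fully_normalized S F Q].
  by apply; last by exists idf; apply: Fiso_id.
move=> Q0; have [n] := ubnP (#|S| - #|'N_S(Q0)|); elim: n Q0 => // n IHn Q0 lt_n sQ0S PQ0.
have [fnQ0 | nfnQ0] := classic (fully_normalized S F Q0); first by exists Q0.
have [Q1 [sQ1S Q0Q1 ltN]] : exists Q1 : {group gT},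
    [/\ Q1 \subset S, Fconj F Q0 Q1 & #|'N_S(Q0)| < #|'N_S(Q1)|].
  apply: NNPP => noQ1; apply: nfnQ0 => Q1 sQ1S Q0Q1; rewrite leqNgt.
  by apply/negP => ltN; apply: noQ1; exists Q1.
apply: (IHn Q1) => //; last exact: Fconj_trans PQ0 Q0Q1.
rewrite -ltnS (leq_trans _ lt_n) // ltnS ltn_sub2l // (leq_trans ltN) //.
by rewrite subset_leq_card ?subsetIl.
Qed.

Lemma S_conj_to_fully_normalized P Q f : S_conj_above #|P| -> P \proper S ->
  Q \subset S -> fully_normalized S F Q -> F P Q f -> #|Q| <= #|P| -> S_conj P f.
Proof.
move=> IH ltPS sQS fnQ Ff leQP; have sPS := proper_sub ltPS.
have eqPQ : #|P| = #|Q|.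
  by apply/eqP; rewrite eqn_leq leQP (injhom_leq_card (fus_injhom sPS sQS Ff)).
have [fcQ _] := satI sQS fnQ.
have IHQ : S_conj_above #|Q| by rewrite -eqPQ.
have AutQ a := @AutF_fully_normalized_conj Q a IHQ sQS fnQ.
have [psi [Fpsi psiE]] := fus_extend_normalizer sPS sQS fcQ AutQ Ff leQP.
have ltPN : #|P| < #|'N_S(P)|.
  by apply/proper_card/nilpotent_proper_norm => //; apply: pgroup_nil pS.
have [g Sg gE] := IH _ (subsetIl _ _) ltPN _ Fpsi.
by exists g => // x Px; rewrite -psiE // gE // inE (subsetP sPS) ?(subsetP (normG P)).
Qed.

(* Route f through a fully normalized F-conjugate Q of P: both P -> Q and
   f(P) -> P -> Q are S-conjugations, hence so is f. *)
Lemma S_conj_step P f : S_conj_above #|P| -> P \subset S -> F P S f -> S_conj P f.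
Proof.
move=> IH sPS Ff; have [Q [sQS [chi chiP] fnQ]] := Fconj_fully_normalized sPS.
have eqPQ := Fiso_card sPS sQS chiP; have [Fchi _] := chiP.
have IHQ : S_conj_above #|Q| by rewrite -eqPQ.
have [ltPS | ] := boolP (P \proper S); last first.
  rewrite properEcard sPS -leqNgt /= => leSP.
  have eqPS : P :=: S by apply/eqP; rewrite eqEcard sPS.
  have eqQS : Q :=: S by apply/eqP; rewrite eqEcard sQS -eqPQ.
  have FQ : F Q Q f by rewrite eqQS -{1}eqPS.
  have [h /setIP[Sh _] hE] := AutF_fully_normalized_conj IHQ sQS fnQ FQ.
  by exists h => // x Px; apply: hE; rewrite eqQS -eqPS.
have [T [psi [sTS [Fpsi [psi' [Fpsi' psiK psi'K]]] fE]]] := fus_factor sPS (subxx S) Ff.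
have eqPT := Fiso_card sPS sTS (conj Fpsi (ex_intro _ psi' (And3 Fpsi' psiK psi'K))).
have ltTS : T \proper S.
  by rewrite properEcard sTS -eqPT; rewrite properEcard in ltPS; case/andP: ltPS.
have IHT : S_conj_above #|T| by rewrite -eqPT.
have [a Sa aE] := S_conj_to_fully_normalized IH ltPS sQS fnQ Fchi (eq_leq (esym eqPQ)).
have [b Sb bE] := S_conj_to_fully_normalized IHT ltTS sQS fnQ
  (fus_comp sTS sPS sQS Fpsi' Fchi) (eq_leq (etrans (esym eqPQ) eqPT)).
exists (b^-1 * a); first by rewrite groupM ?groupV.
move=> x Px; have [_ _ psiPT] := fus_injhom sPS sTS Fpsi.
have ab : a * x * a^-1 = b * psi x * b^-1 by rewrite -aE // -bE ?psiPT // !ffunE psiK.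
have -> : b^-1 * a * x * (b^-1 * a)^-1 = b^-1 * (a * x * a^-1) * b.
  by rewrite invMg invgK !mulgA.
by rewrite ab fE // !mulgA mulVg mul1g mulgKV.
Qed.

Lemma S_conj_all P f : P \subset S -> F P S f -> S_conj P f.
Proof.
have [n] := ubnP (#|S| - #|P|); elim: n P f => // n IHn P f lt_n sPS.
apply: S_conj_step => // R sRS ltPR g Fg; apply: IHn Fg => //.
rewrite -ltnS (leq_trans _ lt_n) // ltnS ltn_sub2l //.
by rewrite (leq_trans ltPR) ?subset_leq_card.
Qed.

Lemma Cp_fixed_nilpotent_fs : nilpotent_fs S F.
Proof.
move=> P Q f sPS sQS; apply/idP/idP => [Ff | ]; last exact: fus_homS.
have [g Sg gE] := S_conj_all sPS (fus_restr sPS (subxx S) (subxx P) sQS Ff).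
have [_ _ fPQ] := fus_injhom sPS sQS Ff.
by apply: (homS_conj Sg gE) => x Px; rewrite -gE ?fPQ.
Qed.

End FusionSystem.

Theorem corollary7p6 (gT : finGroupType) (p : nat) (S : {group gT}) (F : fsys gT)
  (L : linking_system S F) :
  prime p -> p.-group S -> saturated p S F ->
  ((forall x, x \in S -> Cp_elt p x -> in_center S F x) -> nilpotent_fs S F) /\
  (((odd p /\ forall x, x \in Omega p 1 S -> in_center S F x) \/
    (p = 2 /\ forall x, x \in Omega p 2 S -> in_center S F x)) -> nilpotent_fs S F).
Proof.
move=> pr_p pS [fusF [satI satII]].
have nilF : (forall x, x \in S -> Cp_elt p x -> in_center S F x) -> nilpotent_fs S F.
  move=> CpZ; apply: (Cp_fixed_nilpotent_fs fusF pr_p pS satI satII).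
  move=> Q f x sQS cQ Ff Qx Cpx; have [_ fix_x] := CpZ x (subsetP sQS x Qx) Cpx.
  exact: (fix_x _ _ _ sQS sQS cQ cQ Ff).
split=> // OmegaZ; apply: nilF => x Sx Cpx.
case: OmegaZ => [[odd_p OZ] | [p2 OZ]]; apply/OZ/mem_gen; rewrite inE Sx /=.
  by move: Cpx; rewrite /Cp_elt ifN ?expn1 //; apply: contraL odd_p => /eqP->.
by move: Cpx; rewrite /Cp_elt p2.
Qed.
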